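(* Let $D$ be a division semialgebra over $\mathbb{Z}_\mathrm{max}$ with finite unit index, and let $G=D^\times/\mathbb{Z}_\mathrm{max}^\times$. Then for each positive integer $n$, $G$ has at most one cyclic subgroup of order $n$.
   Context: A (possibly noncommutative) semiring has a commutative associative addition with identity $0$ and an associative multiplication with identity $1$, satisfying both distributive laws; a division semiring is one in which every nonzero element is invertible. $\mathbb{Z}_\mathrm{max}=\mathbb{Z}\cup\{-\infty\}$ is the semifield with addition $\max$ and multiplication ordinary addition. A division semialgebra over a semifield $K$ is a division semiring $D$ with an injective homomorphism from $K$ into the center of $D$ (so $K^\times$ is a central subgroup of $D^\times$). The unit index is $\mathrm{ui}(D/K)=|D^\times/K^\times|$. *)

From HB Require Import structures.
From mathcomp Require Import all_boot all_order all_algebra.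
From mathcomp Require Import zify.
Set Implicit Arguments. Unset Strict Implicit. Unset Printing Implicit Defensive.
Import Order.TTheory GRing.Theory Num.Theory.
Local Open Scope ring_scope.

(** * The tropical semifield Z_max = Z ∪ {-oo}, addition = max, multiplication = +.
    [None] is -oo (the zero), [Some z] is the integer z. *)
Definition Zmax : Type := option int.
HB.instance Definition _ := Choice.on Zmax.

Definition zmax_add (a b : Zmax) : Zmax :=
  match a, b with
  | None, _ => b
  | _, None => a
  | Some x, Some y => Some (if x <= y then y else x)
  end.

Definition zmax_mul (a b : Zmax) : Zmax :=
  match a, b with
  | Some x, Some y => Some (x + y)
  | _, _ => None
  end.

Lemma zmax_addA : associative zmax_add.
Proof.
case=> [x|] [y|] [z|] //=; congr Some;
  repeat case: ifP; move=> *; lia.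
Qed.

Lemma zmax_addC : commutative zmax_add.
Proof. case=> [x|] [y|] //=; congr Some; repeat case: ifP; move=> *; lia. Qed.

Lemma zmax_add0 : left_id (None : Zmax) zmax_add.
Proof. by case. Qed.

HB.instance Definition _ := GRing.isNmodule.Build Zmax zmax_addA zmax_addC zmax_add0.

Lemma zmax_mulA : associative zmax_mul.
Proof. case=> [x|] [y|] [z|] //=; congr Some; lia. Qed.

Lemma zmax_mulC : commutative zmax_mul.
Proof. case=> [x|] [y|] //=; congr Some; lia. Qed.

Lemma zmax_mul1 : left_id (Some 0 : Zmax) zmax_mul.
Proof. case=> [x|] //=; congr Some; lia. Qed.

Lemma zmax_mulDl : left_distributive zmax_mul (@GRing.add Zmax).
Proof.
case=> [x|] [y|] [z|] //=; congr Some; repeat case: ifP; move=> *; lia.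
Qed.

Lemma zmax_mul0 : left_zero (GRing.zero : Zmax) zmax_mul.
Proof. by case. Qed.

Lemma zmax_one_neq0 : (Some 0 : Zmax) != GRing.zero.
Proof. by []. Qed.

HB.instance Definition _ := GRing.Nmodule_isComNzSemiRing.Build Zmax
  zmax_mulA zmax_mulC zmax_mul1 zmax_mulDl zmax_mul0 zmax_one_neq0.

(** The units of Z_max are exactly the [Some z]. *)
Definition Zmax_of_int (z : int) : Zmax := Some z.

Section Semiring.
Variable D : nzSemiRingType.

Definition sunit (x : D) : Prop := exists y : D, x * y = 1 /\ y * x = 1.

Definition division_semiring : Prop := forall x : D, x != 0 -> sunit x.

Definition division_semialgebra_Zmax (f : {rmorphism Zmax -> D}) : Prop :=
  [/\ division_semiring, injective f & forall (a : Zmax) (x : D), f a * x = x * f a].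

Variable f : {rmorphism Zmax -> D}.

(** Membership in the central subgroup K^x = f(Z_max^x) of D^x. *)
Definition inKunit (x : D) : Prop := exists z : int, x = f (Zmax_of_int z).

(** Equality in G = D^x / K^x of the classes of two units. *)
Definition Gcong (x y : D) : Prop := exists z : int, x = f (Zmax_of_int z) * y.

(** Finite unit index: D^x/K^x is finite, i.e. finitely many classes. *)
Definition finite_unit_index : Prop :=
  exists s : seq D, (forall v, v \in s -> sunit v) /\
    forall u : D, sunit u -> exists2 v, v \in s & Gcong u v.

(** The class of the unit x has order n in G. *)
Definition Gorder (x : D) (n : nat) : Prop :=
  (0 < n)%N /\ inKunit (x ^+ n) /\
  forall m : nat, (0 < m < n)%N -> ~ inKunit (x ^+ m).

(** The cyclic subgroup of G generated by the class of x, as a predicate on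
    units (a unit u lies in it iff its class is a power of the class of x;
    for x of finite order nonnegative powers suffice). *)
Definition Gcyclic (x : D) : D -> Prop :=
  fun u => sunit u /\ exists k : nat, Gcong u (x ^+ k).

End Semiring.

(* Since 1 + 1 = 1 in Z_max, D is idempotent and x + y = y is a partial order
   compatible with products.  For a unit u, the binomial expansion collapses to
   (1 + u)^N = 1 + u^N.  Finite unit index puts some power u^N in Z_max^x, which is
   totally ordered, so (1 + u)^N is 1 or u^N; as p <= q and p^N = q^N force p = q,
   u is comparable with 1.  Applied to p^-1 q this shows that N-th roots of units are
   unique.  Hence if x and y have order n in G with x^n = a and y^n = b in Z_max^x,
   then b is coprime to n (otherwise a smaller power of y would lie in Z_max^x), and
   taking u b + v n = 1, x and a central multiple of y^(a u mod n) have equal n-th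
   powers, so x lies in <y> Z_max^x; by symmetry <x> = <y>. *)

From HB Require Import structures.
From mathcomp Require Import all_boot all_order all_algebra.
From mathcomp Require Import zify ring.
From Stdlib Require Import ClassicalEpsilon.
Import Order.TTheory GRing.Theory.
Local Open Scope ring_scope.
Set Implicit Arguments. Unset Strict Implicit.

Lemma exists_collision (T : eqType) (s : seq T) (R : nat -> T -> Prop) :
  (forall i, exists2 v, v \in s & R i v) ->
  exists i j v, [/\ (i < j)%N, R i v & R j v].
Proof.
move=> hR.
have hF (i : 'I_(size s).+1) :
    exists j : 'I_(size s), exists v, [/\ v \in s, index v s = j & R i v].
  have [v vs Rv] := hR i.
  by exists (Ordinal (etrans (index_mem v s) vs)), v.
pose F i := sval (constructive_indefinite_description _ (hF i)).
have hFP i : exists v, [/\ v \in s, index v s = F i & R i v].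
  exact: svalP (constructive_indefinite_description _ (hF i)).
have : ~~ injectiveb F.
  by apply/injectiveP => /leq_card; rewrite !card_ord ltnn.
case/injectivePn => i [j neq_ij eq_Fij].
have [v [vs iv Riv]] := hFP i; have [w [ws jw Rjw]] := hFP j.
have eq_vw : v = w by apply: (index_inj v vs ws); rewrite iv jw eq_Fij.
subst w; case: (ltngtP i j) => [lt_ij | lt_ji | eq_ij].
- by exists i, j, v.
- by exists j, i, v.
- by move: neq_ij; rewrite (val_inj eq_ij) eqxx.
Qed.

Section IdempotentSemiring.
Variable D : nzSemiRingType.
Hypothesis add11 : (1 : D) + 1 = 1.

Definition sle (x y : D) := x + y = y.
Definition scomparable (x y : D) := sle x y \/ sle y x.

Lemma addrr (x : D) : x + x = x.
Proof. by rewrite -{1 2}(mulr1 x) -mulrDr add11 mulr1. Qed.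

Lemma sle_refl (x : D) : sle x x.
Proof. exact: addrr. Qed.

Lemma sle_trans (x y z : D) : sle x y -> sle y z -> sle x z.
Proof. by rewrite /sle => xy yz; rewrite -yz addrA xy. Qed.

Lemma sle_anti (x y : D) : sle x y -> sle y x -> x = y.
Proof. by rewrite /sle => xy yx; rewrite -xy -{1}yx addrC. Qed.

Lemma sle_mul2l (z x y : D) : sle x y -> sle (z * x) (z * y).
Proof. by rewrite /sle -mulrDr => ->. Qed.

Lemma sle_mul2r (z x y : D) : sle x y -> sle (x * z) (y * z).
Proof. by rewrite /sle -mulrDl => ->. Qed.

Lemma sle_addr (x y : D) : sle x (x + y).
Proof. by rewrite /sle addrA addrr. Qed.

Lemma sle_addl (x y : D) : sle y (x + y).
Proof. by rewrite addrC; apply: sle_addr. Qed.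

Lemma sle_add (x y z : D) : sle x z -> sle y z -> sle (x + y) z.
Proof. by rewrite /sle => xz yz; rewrite -addrA yz xz. Qed.

Lemma sle_expn (x y : D) m : sle x y -> sle (x ^+ m) (y ^+ m).
Proof.
move=> xy; elim: m => [|m IHm]; first exact: sle_refl.
by rewrite !exprS; apply: sle_trans (sle_mul2l x IHm) (sle_mul2r _ xy).
Qed.

Lemma sunitM (p q : D) : sunit p -> sunit q -> sunit (p * q).
Proof.
move=> [v [pv vp]] [w [qw wq]]; exists (w * v); split.
  by rewrite mulrA -(mulrA p) qw mulr1 pv.
by rewrite mulrA -(mulrA w) vp mulr1 wq.
Qed.

Lemma sunitX (p : D) m : sunit p -> sunit (p ^+ m).
Proof.
move=> [v [pv vp]]; exists (v ^+ m).
have pv_comm : GRing.comm p v by rewrite /GRing.comm pv vp.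
by rewrite -!exprMn_comm // pv vp expr1n.
Qed.

Lemma sunit_lcancel (a x y : D) : sunit a -> a * x = a * y -> x = y.
Proof. by move=> [v [av va]] e; rewrite -(mul1r x) -va -mulrA e mulrA va mul1r. Qed.

Lemma sunit_rcancel (a x y : D) : sunit a -> x * a = y * a -> x = y.
Proof. by move=> [v [av va]] e; rewrite -(mulr1 x) -av mulrA e -mulrA av mulr1. Qed.

Lemma sle_expn_inj (p q : D) m :
  sunit p -> sle p q -> (0 < m)%N -> p ^+ m = q ^+ m -> p = q.
Proof.
move=> up pq; case: m => // m _ e; apply: (sunit_lcancel (sunitX m up)).
apply: sle_anti; first exact: sle_mul2l.
by rewrite -exprSr e exprSr; apply/sle_mul2r/sle_expn.
Qed.

Fixpoint geom (u : D) (m : nat) : D :=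
  if m is m'.+1 then 1 + u * geom u m' else 1.

Lemma sle1_geom u m : sle 1 (geom u m).
Proof. by case: m => [|m]; [apply: sle_refl | apply: sle_addr]. Qed.

Lemma geom_addn (u : D) m k : geom u (m + k) = geom u m + u ^+ m * geom u k.
Proof.
elim: m => [|m IHm]; first by rewrite add0n expr0 mul1r sle1_geom.
by rewrite addSn /= IHm mulrDr mulrA -exprS addrA.
Qed.

Lemma expr1D_geom (u : D) m : (1 + u) ^+ m = geom u m.
Proof.
elim: m => [|m IHm] //; rewrite exprS IHm mulrDl mul1r /=.
have geomS : sle (geom u m) (geom u m.+1).
  elim: m {IHm} => [|m IHm]; first exact: sle_addr.
  by rewrite /sle /= addrACA add11 -mulrDr IHm.
apply: sle_anti; apply: sle_add.
- exact: geomS.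
- exact: sle_addl.
- exact: sle_trans (sle1_geom u m) (sle_addr _ _).
- exact: sle_addl.
Qed.

Hypothesis divD : division_semiring D.

Lemma sunit_sle1 (a : D) : sle 1 a -> sunit a.
Proof.
move=> one_le_a; apply: divD; apply/eqP => a0.
by move: one_le_a; rewrite /sle a0 addr0 => /eqP; rewrite oner_eq0.
Qed.

Lemma expr1D (u : D) n : (1 + u) ^+ n = 1 + u ^+ n.
Proof.
have unit_pow : sunit ((1 + u) ^+ n).
  by apply: sunit_sle1; rewrite -{1}(expr1n _ n); apply: sle_expn; apply: sle_addr.
apply: (sunit_rcancel unit_pow).
by rewrite -exprD !expr1D_geom geom_addn -expr1D_geom mulrDl mul1r.
Qed.

Lemma scomparable1_expr (u : D) n :
  sunit u -> (0 < n)%N -> scomparable 1 (u ^+ n) -> scomparable 1 u.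
Proof.
move=> uu n_gt0; rewrite /scomparable /sle [u ^+ n + 1]addrC.
rewrite [u + 1]addrC -expr1D; case=> e.
  by left; apply/esym/(sle_expn_inj uu (sle_addl _ _) n_gt0); rewrite e.
right; apply/esym/(sle_expn_inj _ (sle_addr _ _) n_gt0).
  by exists 1; rewrite mulr1.
by rewrite e expr1n.
Qed.

End IdempotentSemiring.

Section DivisionSemialgebraZmax.
Variable D : nzSemiRingType.
Variable f : {rmorphism Zmax -> D}.

Local Notation k z := (f (Zmax_of_int z)).

Lemma add11_Zmax : (1 : D) + 1 = 1.
Proof. by rewrite -(rmorph1 f) -rmorphD. Qed.

Lemma fZ0 : k 0 = 1.
Proof. exact: rmorph1. Qed.

Lemma fZM z w : k z * k w = k (z + w).
Proof. by rewrite -rmorphM. Qed.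

Lemma fZX z m : k z ^+ m = k (z * m%:Z).
Proof.
elim: m => [|m IHm]; first by rewrite expr0 mulr0 fZ0.
by rewrite exprS IHm fZM -addn1 PoszD mulrDr mulr1 addrC.
Qed.

Lemma sunit_fZ z : sunit (k z).
Proof. by exists (k (- z)); rewrite !fZM subrr addrC subrr fZ0. Qed.

Lemma fZD z w : k z + k w = k (if z <= w then w else z).
Proof. by rewrite -rmorphD. Qed.

Lemma scomparable_fZ z w : scomparable (k z) (k w).
Proof.
rewrite /scomparable /sle !fZD.
by have [le_zw | /ltW le_wz] := leP z w; [left | right; rewrite le_wz].
Qed.

Hypothesis central_f : forall (a : Zmax) (x : D), f a * x = x * f a.

Lemma Gcong_trans (x y w : D) : Gcong f x y -> Gcong f y w -> Gcong f x w.
Proof. by move=> [z ->] [z' ->]; exists (z + z'); rewrite mulrA fZM. Qed.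

Lemma GcongX (x y : D) m : Gcong f x y -> Gcong f (x ^+ m) (y ^+ m).
Proof.
move=> [z ->]; exists (z * m%:Z).
by rewrite exprMn_comm ?fZX // /GRing.comm central_f.
Qed.

Hypothesis divD : division_semiring D.
Hypothesis finD : finite_unit_index f.

Lemma exists_expr_inK (w : D) : sunit w -> exists2 N, (0 < N)%N & inKunit f (w ^+ N).
Proof.
move=> uw; have [s [_ cover_s]] := finD.
have [i [j [v [lt_ij [z1 e1] [z2 e2]]]]] :=
  exists_collision (fun i => cover_s _ (sunitX i uw)).
exists (j - i)%N; first by rewrite subn_gt0.
exists (z2 - z1); apply: (sunit_rcancel (sunitX i uw)).
by rewrite -exprD subnK 1?ltnW // e1 e2 mulrA fZM addrNK.
Qed.

Lemma scomparable1_sunit (u : D) : sunit u -> scomparable 1 u.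
Proof.
move=> uu; have [N N_gt0 [d ed]] := exists_expr_inK uu.
apply: (scomparable1_expr add11_Zmax divD uu N_gt0).
by rewrite ed -fZ0; apply: scomparable_fZ.
Qed.

Lemma sunit_expr_inj (p q : D) m :
  sunit p -> sunit q -> (0 < m)%N -> p ^+ m = q ^+ m -> p = q.
Proof.
move=> up uq m_gt0 e; have [v [pv vp]] := up.
have pw : p * (v * q) = q by rewrite mulrA pv mul1r.
have [le1_w | w_le1] : scomparable 1 (v * q).
- by apply/scomparable1_sunit/sunitM => //; exists p.
- apply: (sle_expn_inj add11_Zmax up _ m_gt0 e).
  by rewrite -pw -{1}(mulr1 p); apply: sle_mul2l.
- apply/esym/(sle_expn_inj add11_Zmax uq _ m_gt0 (esym e)).
  by rewrite -{1}pw -{2}(mulr1 p); apply: sle_mul2l.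
Qed.

Lemma Gorder_coprime (y : D) n b :
  sunit y -> Gorder f y n -> y ^+ n = k b -> coprime `|b| n.
Proof.
move=> uy [n_gt0 [_ y_min]] yn; set g := gcdn `|b| n.
have g_gt0 : (0 < g)%N by rewrite gcdn_gt0 n_gt0 orbT.
have nE : n = (n %/ g * g)%N by rewrite divnK // dvdn_gcdr.
have bE : b = (b %/ g%:Z)%Z * g%:Z by rewrite divzK //; apply: dvdn_gcdl.
have root_inK : y ^+ (n %/ g) = k (b %/ g%:Z)%Z.
  apply: (sunit_expr_inj (sunitX _ uy) (sunit_fZ _) g_gt0).
  by rewrite -exprM -nE yn fZX -bE.
apply: contraT => g_neq1.
have lt_ng : (0 < n %/ g < n)%N by move: g_neq1; rewrite /coprime -/g; nia.
by case: (y_min _ lt_ng); exists (b %/ g%:Z)%Z.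
Qed.

Lemma Gcong_expr_of_coprime (x y : D) n a b :
  sunit x -> sunit y -> (0 < n)%N -> x ^+ n = k a -> y ^+ n = k b ->
  coprime `|b| n -> exists j, Gcong f x (y ^+ j).
Proof.
move=> ux uy n_gt0 xn yn /eqP cop; have [u [v bezout]] := Bezoutz b n%:Z.
rewrite /gcdz /= cop in bezout.
set q := ((a * u) %/ n%:Z)%Z; set r := ((a * u) %% n%:Z)%Z.
have r_ge0 : 0 <= r by apply: modz_ge0; rewrite eqz_nat -lt0n.
have rE : r = a * u - q * n%:Z.
  by rewrite [in RHS](divz_eq (a * u) n%:Z) -/q -/r; ring.
exists `|r|%N, (q * b + a * v); apply: (sunit_expr_inj (m := n)) => //.
  by apply: sunitM; [apply: sunit_fZ | apply: sunitX].
rewrite xn exprMn_comm; last by rewrite /GRing.comm central_f.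
rewrite fZX exprAC yn fZX fZM gez0_abs // rE.
congr (f (Zmax_of_int _)).
by rewrite -[LHS]mulr1 -[1]bezout; ring.
Qed.

Lemma Gcyclic_sub (x y : D) n :
  sunit x -> sunit y -> Gorder f x n -> Gorder f y n ->
  forall u, Gcyclic f x u -> Gcyclic f y u.
Proof.
move=> ux uy ox oy u [uu [m u_xm]]; split => //.
have [n_gt0 [[a xn] _]] := ox; have [_ [[b yn] _]] := oy.
have [j x_yj] :=
  Gcong_expr_of_coprime ux uy n_gt0 xn yn (Gorder_coprime uy oy yn).
exists (j * m)%N; rewrite exprM.
exact: Gcong_trans u_xm (GcongX m x_yj).
Qed.

End DivisionSemialgebraZmax.

Theorem mainTheorem16 (D : nzSemiRingType) (f : {rmorphism Zmax -> D}) :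
  division_semialgebra_Zmax f ->
  finite_unit_index f ->
  forall n : nat, (0 < n)%N ->
  forall x y : D, sunit x -> sunit y ->
    Gorder f x n -> Gorder f y n ->
    forall u : D, Gcyclic f x u <-> Gcyclic f y u.
Proof.
move=> [divD _ central_f] finD n _ x y ux uy ox oy u.
split; first exact: (Gcyclic_sub central_f divD finD ux uy ox oy).
exact: (Gcyclic_sub central_f divD finD uy ux oy ox).
Qed.
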